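(* Let $\Pi$ be a boolean (possibly recursive) Datalog query with propositional answer atom $\mathit{ans}$, and let $D=D^x\cup D^n$ be a relational instance partitioned into disjoint sets of exogenous tuples $D^x$ and endogenous tuples $D^n$, with $\Pi\cup D\models \mathit{ans}$. Let $\mathcal{AP}^c=\langle \Pi, D^x, D^n, \mathit{ans}\rangle$ be the associated Datalog abduction problem (extensional database $D^x$, hypotheses $D^n$, observation $\mathit{ans}$). Then a tuple $t\in D^n$ is an actual cause for $\mathit{ans}$ if and only if $t\in \mathit{Rel}(\mathcal{AP}^c)$.
   Context: A boolean Datalog query is a finite set $\Pi$ of positive Datalog rules containing a rule defining a propositional atom $\mathit{ans}$; the query is true on instance $D$ (written $\Pi\cup D\models\mathit{ans}$) if $\mathit{ans}$ belongs to the minimal model of $\Pi\cup D$. Database predicates of $D$ do not occur in rule heads. A tuple $\tau\in D^n$ is a counterfactual cause for $\mathit{ans}$ in an instance $D'$ if $\Pi\cup D'\models\mathit{ans}$ and $\Pi\cup (D'\smallsetminus\{\tau\})\not\models\mathit{ans}$; $\tau\in D^n$ is an actual cause for $\mathit{ans}$ if there is a contingency set $\Gamma\subseteq D^n$ such that $\tau$ is a counterfactual cause for $\mathit{ans}$ in $D\smallsetminus\Gamma$. For a Datalog abduction problem $\langle\Pi,E,\mathit{Hyp},\mathit{Obs}\rangle$, an abductive diagnosis is a subset-minimal $\Delta\subseteq\mathit{Hyp}$ with $\Pi\cup E\cup\Delta\models\mathit{Obs}$, and $\mathit{Rel}$ denotes the set of hypotheses belonging to at least one abductive diagnosis. *)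

From Stdlib Require Import List.
Import ListNotations.
Set Implicit Arguments.

Section Datalog.
(* P: predicate symbols, C: constants, V: variables *)
Variables P C V : Type.

Inductive term : Type := TVar (v : V) | TConst (c : C).

Record atom : Type := Atom { apred : P; aargs : list term }.
Record gatom : Type := GAtom { gpred : P; gargs : list C }.
Record rule : Type := Rule { rhead : atom; rbody : list atom }.

Definition program := list rule.

Definition gterm (s : V -> C) (t : term) : C :=
  match t with TVar v => s v | TConst c => c end.

Definition ground (s : V -> C) (a : atom) : gatom :=
  GAtom (apred a) (map (gterm s) (aargs a)).

Definition vars_of_atom (a : atom) : list V :=
  flat_map (fun t => match t with TVar v => [v] | TConst _ => [] end) (aargs a).

Definition safe_rule (r : rule) : Prop :=
  forall v, In v (vars_of_atom (rhead r)) ->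
    exists b, In b (rbody r) /\ In v (vars_of_atom b).

Definition instance := gatom -> Prop.

(* Minimal model of Pi u D: the least set containing D and closed under
   the ground instances of the rules of Pi. *)
Inductive models (Pi : program) (D : instance) : gatom -> Prop :=
| models_fact : forall a, D a -> models Pi D a
| models_rule : forall r s, In r Pi ->
    (forall b, In b (rbody r) -> models Pi D (ground s b)) ->
    models Pi D (ground s (rhead r)).

Definition ans_atom (ans : P) : gatom := GAtom ans [].

Definition boolean_query (Pi : program) (ans : P) : Prop :=
  (forall r, In r Pi -> safe_rule r) /\
  (exists r, In r Pi /\ rhead r = Atom ans []) /\
  (forall r, In r Pi -> apred (rhead r) = ans -> aargs (rhead r) = []).

Definition edb_only (Pi : program) (D : instance) : Prop :=
  forall t r, D t -> In r Pi -> apred (rhead r) <> gpred t.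

Definition set_minus (D : instance) (G : gatom -> Prop) : instance :=
  fun a => D a /\ ~ G a.

Definition set_union (D1 D2 : instance) : instance :=
  fun a => D1 a \/ D2 a.

Definition counterfactual_cause (Pi : program) (ans : P) (D' : instance)
  (t : gatom) : Prop :=
  models Pi D' (ans_atom ans) /\
  ~ models Pi (set_minus D' (fun a => a = t)) (ans_atom ans).

Definition actual_cause (Pi : program) (ans : P) (Dx Dn : list gatom)
  (t : gatom) : Prop :=
  In t Dn /\
  exists G : gatom -> Prop, (forall a, G a -> In a Dn) /\
    counterfactual_cause Pi ans
      (set_minus (fun a => In a Dx \/ In a Dn) G) t.

Definition entails_obs (Pi : program) (D : instance) (Obs : list gatom) :=
  forall o, In o Obs -> models Pi D o.

Definition is_diagnosis (Pi : program) (E Hyp : list gatom) (Obs : list gatom)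
  (Delta : gatom -> Prop) : Prop :=
  (forall a, Delta a -> In a Hyp) /\
  entails_obs Pi (set_union (fun a => In a E) Delta) Obs /\
  (forall Delta' : gatom -> Prop, (forall a, Delta' a -> Delta a) ->
     entails_obs Pi (set_union (fun a => In a E) Delta') Obs ->
     forall a, Delta a -> Delta' a).

Definition Rel (Pi : program) (E Hyp Obs : list gatom) (h : gatom) : Prop :=
  In h Hyp /\ exists Delta, is_diagnosis Pi E Hyp Obs Delta /\ Delta h.

End Datalog.

(* Both sides are equivalent to: t is a counterfactual cause for ans in
   Dx ∪ Δ for some Δ ⊆ Dn.  For actual causes, the contingency set Γ and Δ
   determine each other by Δ = Dn \ Γ.  A diagnosis containing t is such a Δ,
   since by minimality Δ \ {t} no longer explains ans.  Conversely, Δ ⊆ Dn is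
   finite, so it contains a subset-minimal Δ' with Π ∪ Dx ∪ Δ' ⊨ ans; that is
   a diagnosis, and it contains t because Dx ∪ Δ' ⊆ (Dx ∪ Δ) \ {t} otherwise. *)

From Stdlib Require Import List Arith Classical ClassicalEpsilon Lia.
Import ListNotations.

Section MinimalSubset.

Variable A : Type.

Definition card_in (L : list A) (S : A -> Prop) : nat :=
  length (filter (fun a => if excluded_middle_informative (S a) then true else false) L).

Lemma card_in_cons x L S :
  card_in (x :: L) S =
  (if excluded_middle_informative (S x) then 1 else 0) + card_in L S.
Proof. unfold card_in; simpl; destruct excluded_middle_informative; reflexivity. Qed.

Lemma card_in_le L (S T : A -> Prop) :
  (forall a, S a -> T a) -> card_in L S <= card_in L T.
Proof.
  intros HST; induction L as [|x L IH]; [constructor|].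
  rewrite !card_in_cons.
  destruct (excluded_middle_informative (S x)), (excluded_middle_informative (T x));
    try lia.
  exfalso; auto.
Qed.

Lemma card_in_lt L (S T : A -> Prop) a :
  (forall x, S x -> T x) -> In a L -> T a -> ~ S a -> card_in L S < card_in L T.
Proof.
  intros HST HaL Ta nSa; induction L as [|x L IH]; [destruct HaL|].
  rewrite !card_in_cons.
  destruct HaL as [->|HaL].
  - destruct (excluded_middle_informative (S a)); [contradiction|].
    destruct (excluded_middle_informative (T a)); [|contradiction].
    pose proof (card_in_le L S T HST); lia.
  - destruct (excluded_middle_informative (S x)), (excluded_middle_informative (T x));
      specialize (IH HaL); try lia.
    exfalso; auto.
Qed.

Lemma exists_minimal_subset (L : list A) (Q : (A -> Prop) -> Prop) (S0 : A -> Prop) :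
  (forall a, S0 a -> In a L) -> Q S0 ->
  exists S, (forall a, S a -> S0 a) /\ Q S /\
    forall S', (forall a, S' a -> S a) -> Q S' -> forall a, S a -> S' a.
Proof.
  remember (card_in L S0) as n eqn:Hn; revert S0 Hn.
  induction n as [n IH] using lt_wf_ind; intros S0 -> HS0L QS0.
  destruct (classic (forall S', (forall a, S' a -> S0 a) -> Q S' ->
                       forall a, S0 a -> S' a)) as [Hmin|Hnmin].
  - exists S0; auto.
  - assert (Hsmaller : exists S' a,
             (forall x, S' x -> S0 x) /\ Q S' /\ S0 a /\ ~ S' a).
    { apply NNPP; intros Hnone; apply Hnmin; intros S' HS'S0 QS' a Ha.
      apply NNPP; intros nS'a; eauto 7. }
    destruct Hsmaller as (S' & a & HS'S0 & QS' & S0a & nS'a).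
    destruct (IH (card_in L S') (card_in_lt L S' S0 a HS'S0 (HS0L a S0a) S0a nS'a) S' eq_refl)
      as (S & HSS' & QS & HSmin); auto.
    exists S; auto.
Qed.

End MinimalSubset.

Section Causes.

Variables (P C V : Type) (Pi : program P C V) (ans : P).

Lemma models_mono (D D' : instance P C) a :
  (forall x, D x -> D' x) -> models Pi D a -> models Pi D' a.
Proof.
  intros HDD' Hm; induction Hm.
  - apply models_fact; auto.
  - apply models_rule; auto.
Qed.

Lemma counterfactual_cause_ext (D D' : instance P C) t :
  (forall x, D x <-> D' x) ->
  counterfactual_cause Pi ans D t -> counterfactual_cause Pi ans D' t.
Proof.
  intros HDD' [Hm Hnm]; split.
  - apply (models_mono _ _ _ (fun x => proj1 (HDD' x)) Hm).
  - intros Hm'; apply Hnm; revert Hm'; apply models_mono.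
    intros x [HD'x Hxt]; split; [apply HDD'|]; assumption.
Qed.

Lemma entails_obs1 (D : instance P C) o :
  entails_obs Pi D [o] <-> models Pi D o.
Proof.
  split; [intros Hobs; apply Hobs; left; reflexivity|].
  intros Hm o' [<-|[]]; exact Hm.
Qed.

Variables Dx Dn : list (gatom P C).
Hypothesis Dx_Dn_disjoint : forall a, In a Dx -> ~ In a Dn.

Lemma actual_cause_iff_counterfactual_extension t : In t Dn ->
  actual_cause Pi ans Dx Dn t <->
  exists Delta, (forall a, Delta a -> In a Dn) /\
    counterfactual_cause Pi ans (set_union (fun a => In a Dx) Delta) t.
Proof.
  intros Ht; split.
  - intros [_ [G [HG Hcc]]].
    exists (fun a => In a Dn /\ ~ G a); split; [tauto|].
    eapply counterfactual_cause_ext; [|exact Hcc]; intros x; split.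
    + intros [[Hx|Hx] nGx]; [left|right]; auto.
    + intros [Hx|[Hx nGx]]; split; auto.
      intros Gx; apply (Dx_Dn_disjoint _ Hx), HG, Gx.
  - intros [Delta [HDelta Hcc]]; split; [exact Ht|].
    exists (fun a => In a Dn /\ ~ Delta a); split; [tauto|].
    eapply counterfactual_cause_ext; [|exact Hcc]; intros x; split.
    + intros [Hx|Hx]; split; auto; intros [Hn nDx].
      * apply (Dx_Dn_disjoint _ Hx Hn).
      * contradiction.
    + intros [[Hx|Hx] nG]; [left; exact Hx|right].
      apply NNPP; intros nDx; apply nG; split; assumption.
Qed.

Lemma Rel_iff_counterfactual_extension t : In t Dn ->
  Rel Pi Dx Dn [ans_atom C ans] t <->
  exists Delta, (forall a, Delta a -> In a Dn) /\
    counterfactual_cause Pi ans (set_union (fun a => In a Dx) Delta) t.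
Proof.
  intros Ht; split.
  - intros [_ [Delta [[HDelta [Hobs Hmin]] Dt]]].
    exists Delta; split; [exact HDelta|split; [apply entails_obs1, Hobs|]].
    intros Hm.
    assert (Hmin_t : Delta t /\ t <> t).
    { apply (Hmin (fun b => Delta b /\ b <> t)); [tauto| |exact Dt].
      apply entails_obs1; revert Hm; apply models_mono.
      intros x [[Hx|Hx] Hxt]; [left|right]; auto. }
    apply (proj2 Hmin_t); reflexivity.
  - intros [Delta [HDelta [Hm Hnm]]].
    destruct (exists_minimal_subset _ Dn
                (fun S => models Pi (set_union (fun a => In a Dx) S) (ans_atom C ans))
                Delta HDelta Hm) as (Dmin & HDmin & Hmmin & Hmin).
    split; [exact Ht|exists Dmin; split].
    + split; [auto|split; [apply entails_obs1, Hmmin|]].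
      intros D' HD' Hobs; apply Hmin; [exact HD'|apply entails_obs1, Hobs].
    + apply NNPP; intros nDt; apply Hnm; revert Hmmin; apply models_mono.
      intros x [Hx|Hx]; split.
      * left; exact Hx.
      * intros ->; apply (Dx_Dn_disjoint _ Hx Ht).
      * right; auto.
      * intros ->; contradiction.
Qed.

End Causes.

Theorem proposition2 (P C V : Type) (Pi : program P C V) (ans : P)
  (Dx Dn : list (gatom P C)) :
  boolean_query Pi ans ->
  edb_only Pi (fun a => In a Dx \/ In a Dn) ->
  (forall a, In a Dx -> ~ In a Dn) ->
  models Pi (fun a => In a Dx \/ In a Dn) (ans_atom C ans) ->
  forall t, In t Dn ->
    (actual_cause Pi ans Dx Dn t <-> Rel Pi Dx Dn (ans_atom C ans :: nil) t).
Proof.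
  intros _ _ Hdisj _ t Ht.
  etransitivity.
  - apply actual_cause_iff_counterfactual_extension; assumption.
  - symmetry; apply Rel_iff_counterfactual_extension; assumption.
Qed.
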